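(* Let $V$ be a finite-dimensional complex vector space and let $c_1,c_2\in\wedge^2V$ be such that $c_\lambda=\lambda_1c_1+\lambda_2c_2$ is nondegenerate for generic $\lambda\in\mathbb C^2$. Let $K\subset V$ be a subspace, let $p:V\to V'=V/K$ be the projection, and assume that $c_i'=\wedge^2p(c_i)$, $i=1,2$, are linearly independent. Set $c'_\lambda=\lambda_1c'_1+\lambda_2c'_2$, $R_0'=\max_\lambda\operatorname{rank}c'_\lambda$, and $$d_\lambda=\dim\ c_\lambda^\sharp(K^\perp)\big/\bigl(K\cap c_\lambda^\sharp(K^\perp)\bigr).$$ Then $\operatorname{rank}c'_\lambda=R_0'$ for all $\lambda\in\mathbb C^2\setminus\{0\}$ if and only if $d_\lambda$ is independent of $\lambda\in\mathbb C^2\setminus\{0\}$.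
   Context: $K^\perp\subset V^*$ denotes the annihilator of $K$. For $b\in\wedge^2V$, $b^\sharp:V^*\to V$ is contraction in the first argument, and $\operatorname{rank}b=\dim\operatorname{im}b^\sharp$. *)

From mathcomp Require Import all_boot all_order all_algebra.
From mathcomp Require Import complex Rstruct boolp.
From Stdlib Require Import Reals.
Set Implicit Arguments. Unset Strict Implicit. Unset Printing Implicit Defensive.
Import Order.TTheory GRing.Theory Num.Theory.
Local Open Scope ring_scope.

Definition C : numClosedFieldType := (Rdefinitions.R)[i].

(* V = C^n is represented by row vectors 'rV[C]_n; a covector
   xi in V^* is represented by the row vector of its coordinates (xi^T), so
   that xi(v) = v *m xi^T.  A bivector b = (1/2) sum_{i,j} B i j e_i /\ e_j in
   wedge^2 V is represented by the skew-symmetric matrix B (B^T = -B).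
   Contraction in the first argument gives b^#(xi) = xi *m B (row vector). *)

Definition bivector n (B : 'M[C]_n) : Prop := B^T = - B.

(* image under b^# of the subspace of V^* spanned by the rows of S *)
Definition sharp_img n k (B : 'M[C]_n) (S : 'M[C]_(k, n)) : 'M[C]_(k, n) :=
  S *m B.

Definition bvrank n (B : 'M[C]_n) : nat := \rank (sharp_img B 1%:M).

Definition nondeg_bivector n (B : 'M[C]_n) : Prop := bvrank B = n.

Definition pencil n (B1 B2 : 'M[C]_n) (l1 l2 : C) : 'M[C]_n :=
  l1 *: B1 + l2 *: B2.

(* evaluation of a bivariate polynomial p(x1,x2) in {poly {poly C}}
   (outer variable x2, inner variable x1) *)
Definition eval2 (p : {poly {poly C}}) (x1 x2 : C) : C := (p.[x2%:P]).[x1].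

(* a property holds for generic lambda in C^2: it holds on a nonempty
   Zariski-open (basic open) subset { lambda | p(lambda) <> 0 }, p <> 0 *)
Definition generic (P : C -> C -> Prop) : Prop :=
  exists2 p : {poly {poly C}}, p != 0 &
    forall l1 l2, eval2 p l1 l2 != 0 -> P l1 l2.

(* wedge^2 p (b) for a linear map p : V -> V', v |-> v *m P *)
Definition wedge2_map n n' (P : 'M[C]_(n, n')) (B : 'M[C]_n) : 'M[C]_n' :=
  P^T *m B *m P.

(* annihilator K^perp of the subspace K (= row space of K), as covectors *)
Definition annih n (K : 'M[C]_n) : 'M[C]_n := kermx K^T.

Definition max_pencil_rank n (B1 B2 : 'M[C]_n) : nat :=
  \max_(k < n.+1 | `[< exists l1 l2, bvrank (pencil B1 B2 l1 l2) = k >]) k.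

Definition dquot n (K B : 'M[C]_n) : nat :=
  let W := sharp_img B (annih K) in subn (\rank W) (\rank (K :&: W)%MS).

From mathcomp Require Import all_boot all_order all_algebra.
From mathcomp Require Import complex Rstruct boolp.
Set Implicit Arguments. Unset Strict Implicit. Unset Printing Implicit Defensive.
Import Order.TTheory GRing.Theory Num.Theory.
Local Open Scope ring_scope.

(* The transpose of p identifies V'^* with K^perp, so c'_lambda^# is
   p o c_lambda^# restricted to K^perp.  Its image is c_lambda^#(K^perp)
   pushed through p, whose kernel is K; by rank-nullity
   rank c'_lambda = d_lambda for every lambda.  The theorem then only says
   that a function on C^2 \ {0} is constant iff it is constantly equal to its
   maximum (rank c'_0 = 0 does not affect the maximum). *)

Lemma trmx_eqmx_annih n n' (K : 'M[C]_n) (P : 'M[C]_(n, n')) :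
  (kermx P == K)%MS -> row_full P -> (P^T :=: annih K)%MS.
Proof.
move=> kerP fullP; have /andP[_ sKkerP] := kerP.
have sPtK : (P^T <= annih K)%MS.
  by apply/sub_kermxP; rewrite -trmx_mul (sub_kermxP sKkerP) trmx0.
apply/eqmxP; rewrite -(mxrank_leqif_eq sPtK) /annih mxrank_ker !mxrank_tr.
by rewrite -(eqmx_rank kerP) mxrank_ker subKn ?rank_leq_row.
Qed.

Lemma bvrank_wedge2_map n n' (K : 'M[C]_n) (P : 'M[C]_(n, n')) (B : 'M[C]_n) :
  (kermx P == K)%MS -> row_full P -> bvrank (wedge2_map P B) = dquot K B.
Proof.
move=> kerP fullP.
rewrite /bvrank /dquot /sharp_img /wedge2_map mul1mx.
rewrite -(mxrank_mul_ker (annih K *m B) P).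
have -> : \rank (P^T *m B *m P) = \rank (annih K *m B *m P).
  apply: eqmx_rank; apply/eqmxP; apply: eqmxMr; apply: eqmxMr.
  exact: trmx_eqmx_annih.
have -> : \rank (annih K *m B :&: kermx P)%MS = \rank (K :&: annih K *m B)%MS.
  rewrite capmxC; apply: eqmx_rank; apply/eqmxP; apply: cap_eqmx => //.
  exact/eqmxP.
by rewrite addnK.
Qed.

Lemma pencil_wedge2_map n n' (P : 'M[C]_(n, n')) (B1 B2 : 'M[C]_n) l1 l2 :
  pencil (wedge2_map P B1) (wedge2_map P B2) l1 l2 =
  wedge2_map P (pencil B1 B2 l1 l2).
Proof.
by rewrite /pencil /wedge2_map mulmxDr mulmxDl -!scalemxAr -!scalemxAl.
Qed.

Lemma bvrank_pencil00 n (B1 B2 : 'M[C]_n) : bvrank (pencil B1 B2 0 0) = 0%N.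
Proof. by rewrite /bvrank /sharp_img /pencil !scale0r addr0 mulmx0 mxrank0. Qed.

Lemma max_pencil_rank_const n (B1 B2 : 'M[C]_n) (d : nat) :
  (forall l1 l2 : C, (l1, l2) != (0, 0) -> bvrank (pencil B1 B2 l1 l2) = d) ->
  max_pencil_rank B1 B2 = d.
Proof.
move=> rank_d.
have nz10 : ((1 : C), (0 : C)) != (0, 0).
  by apply/negP => /eqP [] /eqP; rewrite oner_eq0.
have rank10 := rank_d 1 0 nz10.
apply/eqP; rewrite eqn_leq; apply/andP; split.
  apply/bigmax_leqP => k /asboolP [l1 [l2 <-]].
  have [[-> ->]|nz] := eqVneq (l1, l2) (0, 0); first by rewrite bvrank_pencil00.
  by rewrite rank_d.
have d_lt : (d < n.+1)%N by rewrite ltnS -rank10 rank_leq_col.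
apply: (@leq_bigmax_cond _ _ _ (Ordinal d_lt)).
by apply/asboolP; exists 1, 0.
Qed.

Theorem mainTheorem5 (n n' : nat) (c1 c2 : 'M[C]_n) (K : 'M[C]_n)
    (P : 'M[C]_(n, n')) :
  bivector c1 -> bivector c2 ->
  generic (fun l1 l2 => nondeg_bivector (pencil c1 c2 l1 l2)) ->
  (kermx P == K)%MS -> row_full P ->
  (forall a1 a2 : C,
     a1 *: wedge2_map P c1 + a2 *: wedge2_map P c2 = 0 -> a1 = 0 /\ a2 = 0) ->
  (forall l1 l2 : C, (l1, l2) != (0, 0) ->
     bvrank (pencil (wedge2_map P c1) (wedge2_map P c2) l1 l2)
     = max_pencil_rank (wedge2_map P c1) (wedge2_map P c2))
  <->
  (exists d : nat, forall l1 l2 : C, (l1, l2) != (0, 0) ->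
     dquot K (pencil c1 c2 l1 l2) = d).
Proof.
move=> _ _ _ kerP fullP _.
have rank_dquot l1 l2 :
    bvrank (pencil (wedge2_map P c1) (wedge2_map P c2) l1 l2)
    = dquot K (pencil c1 c2 l1 l2).
  by rewrite pencil_wedge2_map (bvrank_wedge2_map _ kerP fullP).
split=> [rank_max | [d dquot_d]].
  by exists (max_pencil_rank (wedge2_map P c1) (wedge2_map P c2)) => l1 l2 nz;
    rewrite -rank_dquot rank_max.
have rank_d l1 l2 : (l1, l2) != (0, 0) ->
    bvrank (pencil (wedge2_map P c1) (wedge2_map P c2) l1 l2) = d.
  by move=> nz; rewrite rank_dquot dquot_d.
by move=> l1 l2 nz; rewrite (max_pencil_rank_const rank_d) rank_d.
Qed.
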